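(* Every uniform, non-singular, IC-pseudo injective right $R$-module is quasi-pseudo principally injective.
   Context: All rings are associative with identity and all modules are unitary right $R$-modules. A nonzero module $U$ is uniform if every nonzero submodule of $U$ is essential in $U$. For a module $M$, $Z(M)=\{x\in M: xI=0$ for some essential right ideal $I$ of $R\}$; $M$ is non-singular if $Z(M)=0$. A submodule $A$ of $M$ is closed if it has no proper essential extension inside $M$. For modules $M,N$, $N$ is IC-pseudo $M$-injective if for every submodule $A$ of $M$ that is isomorphic to a closed submodule of $M$, every $R$-monomorphism $A\to N$ extends to an $R$-homomorphism $M\to N$; $M$ is IC-pseudo injective if it is IC-pseudo $M$-injective. A submodule $N$ of $M$ is $M$-cyclic if $N\cong M/L$ for some submodule $L$ of $M$ (equivalently, $N$ is the image of an endomorphism of $M$). $M$ is quasi-pseudo principally injective if for every $M$-cyclic submodule $A$ of $M$, every $R$-monomorphism $A\to M$ extends to an $R$-endomorphism of $M$. *)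

(* A right R-module is encoded as a left module over the
   converse ring R^c: the right action m.r is  (r : R^c) *: m . *)
From HB Require Import structures.
From mathcomp Require Import all_boot all_order all_algebra.
Set Implicit Arguments. Unset Strict Implicit. Unset Printing Implicit Defensive.
Import GRing.Theory.
Local Open Scope ring_scope.

Section ModuleDefs.
Variable R : pzRingType.

Definition ract (M : lmodType R^c) (m : M) (r : R) : M := (r : R^c) *: m.

Definition submodule (M : lmodType R^c) (A : M -> Prop) : Prop :=
  [/\ A 0, (forall x y, A x -> A y -> A (x + y))
         & (forall x (r : R), A x -> A (ract x r))].

Definition essential_in (M : lmodType R^c) (B A : M -> Prop) : Prop :=
  [/\ submodule B, submodule A, (forall x, B x -> A x)
    & forall X : M -> Prop, submodule X -> (forall x, X x -> A x) ->
        (exists x, X x /\ x <> 0) -> exists x, X x /\ B x /\ x <> 0].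

Definition fullset (M : lmodType R^c) : M -> Prop := fun _ => True.

Definition uniform (M : lmodType R^c) : Prop :=
  (exists x : M, x <> 0) /\
  forall B : M -> Prop, submodule B -> (exists x, B x /\ x <> 0) ->
    essential_in B (@fullset M).

Definition right_ideal (I : R -> Prop) : Prop :=
  [/\ I 0, (forall x y, I x -> I y -> I (x + y)) & (forall x r, I x -> I (x * r))].

Definition essential_right_ideal (I : R -> Prop) : Prop :=
  right_ideal I /\
  forall J : R -> Prop, right_ideal J -> (exists x, J x /\ x <> 0) ->
    exists x, J x /\ I x /\ x <> 0.

Definition singular_elt (M : lmodType R^c) (x : M) : Prop :=
  exists I : R -> Prop, essential_right_ideal I /\ forall a, I a -> ract x a = 0.

Definition nonsingular (M : lmodType R^c) : Prop :=
  forall x : M, singular_elt x -> x = 0.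

Definition closed_sub (M : lmodType R^c) (A : M -> Prop) : Prop :=
  submodule A /\
  forall B : M -> Prop, submodule B -> essential_in A B -> forall x, B x -> A x.

Definition mono_on (M N : lmodType R^c) (A : M -> Prop) (f : M -> N) : Prop :=
  [/\ (forall x y, A x -> A y -> f (x + y) = f x + f y),
      (forall x r, A x -> f (ract x r) = ract (f x) r)
    & (forall x y, A x -> A y -> f x = f y -> x = y)].

Definition iso_sub (M : lmodType R^c) (A C : M -> Prop) : Prop :=
  exists h : M -> M, [/\ mono_on A h, (forall x, A x -> C (h x))
                       & (forall y, C y -> exists x, A x /\ h x = y)].

Definition mono_extends (M N : lmodType R^c) (A : M -> Prop) : Prop :=
  forall f : M -> N, mono_on A f ->
    exists g : {linear M -> N}, forall x, A x -> g x = f x.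

Definition IC_pseudo_inj (M N : lmodType R^c) : Prop :=
  forall A : M -> Prop, submodule A ->
    (exists C : M -> Prop, closed_sub C /\ iso_sub A C) ->
    mono_extends N A.

Definition IC_pseudo_injective (M : lmodType R^c) : Prop := IC_pseudo_inj M M.

Definition M_cyclic (M : lmodType R^c) (A : M -> Prop) : Prop :=
  exists f : {linear M -> M}, forall y, A y <-> exists x, f x = y.

Definition quasi_pseudo_principally_injective (M : lmodType R^c) : Prop :=
  forall A : M -> Prop, submodule A -> M_cyclic A -> mono_extends M A.

End ModuleDefs.

(* If the image A of an endomorphism f of M is nonzero, then ker f is not
   essential in M: otherwise, for every x, the right ideal (ker f : x) is
   essential and annihilates f x, so non-singularity forces f = 0.  As M is
   uniform, ker f = 0, hence A is isomorphic to the closed submodule M itself.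
   If A = 0, it is closed.  Either way IC-pseudo injectivity extends every
   monomorphism A -> M. *)
From HB Require Import structures.
From mathcomp Require Import all_boot all_order all_algebra.
From Stdlib Require Import Classical ClassicalEpsilon.
Import GRing.Theory.
Local Open Scope ring_scope.

Section RightAction.
Variables (R : pzRingType) (M N : lmodType R^c).

Lemma ract_linear (f : {linear M -> N}) x r : f (ract x r) = ract (f x) r.
Proof. by rewrite /ract linearZ. Qed.

Lemma ractA (x : M) (a r : R) : ract x (a * r) = ract (ract x a) r.
Proof. by rewrite /ract scalerA. Qed.

Lemma ractDr (x : M) (a b : R) : ract x (a + b) = ract x a + ract x b.
Proof. by rewrite /ract scalerDl. Qed.

Lemma ract0r (x : M) : ract x 0 = 0.
Proof. by rewrite /ract scale0r. Qed.

Lemma ract0 (r : R) : ract (0 : M) r = 0.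
Proof. by rewrite /ract scaler0. Qed.

End RightAction.

Section SingularKernel.
Variables (R : pzRingType) (M N : lmodType R^c).

Definition colon_ideal (K : M -> Prop) (x : M) : R -> Prop :=
  fun a => K (ract x a).

Lemma right_ideal_colon (K : M -> Prop) x :
  submodule K -> right_ideal (colon_ideal K x).
Proof.
case=> K0 KD KM; split; rewrite /colon_ideal.
- by rewrite ract0r.
- by move=> a b Ka Kb; rewrite ractDr; apply: KD.
- by move=> a r Ka; rewrite ractA; apply: KM.
Qed.

Lemma essential_colon_ideal (K : M -> Prop) x :
  essential_in K (@fullset _ M) -> essential_right_ideal (colon_ideal K x).
Proof.
case=> subK _ _ essK; split; first exact: right_ideal_colon.
move=> J [J0 JD JM] [j [Jj j_neq0]].
have [[a [Ja a_neq0 xa0]] | xJ_free] :=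
  classic (exists a, [/\ J a, a <> 0 & ract x a = 0]).
  by exists a; split=> //; rewrite /colon_ideal xa0; case: subK.
pose xJ := fun y : M => exists a, J a /\ ract x a = y.
have sub_xJ : submodule xJ.
  split.
  - by exists 0; rewrite ract0r.
  - by move=> _ _ [a [Ja <-]] [b [Jb <-]]; exists (a + b); rewrite ractDr; auto.
  - by move=> _ r [a [Ja <-]]; exists (a * r); rewrite ractA; auto.
have xJ_neq0 : exists y, xJ y /\ y <> 0.
  by exists (ract x j); split; [exists j | move=> xj0; apply: xJ_free; exists j].
have [_ [[a [Ja <-]] [Kxa xa_neq0]]] := essK xJ sub_xJ (fun _ _ => I) xJ_neq0.
by exists a; split=> //; split=> // a0; apply: xa_neq0; rewrite a0 ract0r.
Qed.

Lemma submodule_ker (f : {linear M -> N}) : submodule (fun x => f x = 0).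
Proof.
split; first exact: linear0.
- by move=> x y fx0 fy0; rewrite linearD fx0 fy0 addr0.
- by move=> x r fx0; rewrite ract_linear fx0 ract0.
Qed.

(* f x is annihilated by the essential right ideal (ker f : x). *)
Lemma essential_ker_nonsingular (f : {linear M -> N}) :
  nonsingular N -> essential_in (fun x => f x = 0) (@fullset _ M) ->
  forall x, f x = 0.
Proof.
move=> nsN essK x; apply: nsN.
exists (colon_ideal (fun y => f y = 0) x); split; first exact: essential_colon_ideal.
by move=> a; rewrite /colon_ideal ract_linear.
Qed.

Lemma uniform_nonsingular_linear_inj (f : {linear M -> N}) :
  uniform M -> nonsingular N -> (exists x, f x <> 0) -> injective f.
Proof.
move=> [_ essM] nsN [x0 fx0_neq0].
have ker0 : forall k, f k = 0 -> k = 0.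
  move=> k fk0; apply: NNPP => k_neq0; apply: fx0_neq0.
  apply: essential_ker_nonsingular => //.
  by apply: essM; [exact: submodule_ker | exists k].
move=> x y fxy; apply/eqP; rewrite -subr_eq0; apply/eqP; apply: ker0.
by rewrite linearB fxy subrr.
Qed.

End SingularKernel.

Section ClosedSubmodules.
Variables (R : pzRingType) (M : lmodType R^c).

Lemma closed_fullset : closed_sub (@fullset _ M).
Proof. by split. Qed.

Lemma closed_zero (A : M -> Prop) :
  submodule A -> (forall x, A x -> x = 0) -> closed_sub A.
Proof.
move=> subA A0; split=> // B subB [_ _ _ essA] x Bx.
have [-> | x_neq0] := classic (x = 0); first by case: subA.
have [y [_ [Ay y_neq0]]] := essA B subB (fun _ By => By) (ex_intro _ x (conj Bx x_neq0)).
by case: y_neq0; apply: A0.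
Qed.

Lemma iso_sub_refl (A : M -> Prop) : submodule A -> iso_sub A A.
Proof. by move=> subA; exists id; split=> // y Ay; exists y. Qed.

Lemma iso_sub_image_fullset (f : {linear M -> M}) (A : M -> Prop) :
  injective f -> submodule A -> (forall y, A y <-> exists x, f x = y) ->
  iso_sub A (@fullset _ M).
Proof.
move=> f_inj [_ AD AM] imA.
pose h y := epsilon (inhabits (0 : M)) (fun x => f x = y).
have hK y : A y -> f (h y) = y by move=> /imA; apply: epsilon_spec.
exists h; split=> //.
- split=> [x y Ax Ay | x r Ax | x y Ax Ay hxy]; first 2 last.
  + by rewrite -(hK x Ax) -(hK y Ay) hxy.
  + by apply: f_inj; rewrite linearD !hK //; apply: AD.
  + by apply: f_inj; rewrite ract_linear !hK //; apply: AM.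
- move=> y _; have Afy : A (f y) by apply/imA; exists y.
  by exists (f y); split=> //; apply: f_inj; rewrite hK.
Qed.

End ClosedSubmodules.

Theorem proposition2p11 (R : pzRingType) (M : lmodType R^c) :
  uniform M -> nonsingular M -> IC_pseudo_injective M ->
  quasi_pseudo_principally_injective M.
Proof.
move=> uM nsM icM A subA [f imA]; apply: icM => //.
have [f_neq0 | f0] := classic (exists x, f x <> 0).
  exists (@fullset _ M); split; first exact: closed_fullset.
  apply: iso_sub_image_fullset subA imA.
  exact: uniform_nonsingular_linear_inj.
exists A; split; last exact: iso_sub_refl.
apply: closed_zero => // _ /imA [x <-].
by apply: NNPP => fx_neq0; apply: f0; exists x.
Qed.
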